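(* The $R_5$-submodules $U',U'',U''',U''''$ and $U$ of $H_5$ are stable under $\Phi$, i.e. $\Phi(X)\subseteq X$ for each of them.
   Context: Let $B_3=\langle s_1,s_2\mid s_1s_2s_1=s_2s_1s_2\rangle$, $R_5=\mathbb{Z}[a,b,c,d,e,e^{-1}]$, and let $H_5$ be the quotient of the group algebra $R_5B_3$ by the relations $s_i^5=as_i^4+bs_i^3+cs_i^2+ds_i+e$ for $i=1,2$; identify $s_i$ with their images. Let $\Phi$ be the ring (i.e. $\mathbb{Z}$-algebra) automorphism of $H_5$ determined by $s_i\mapsto s_i^{-1}$ ($i=1,2$), $a\mapsto -e^{-1}d$, $b\mapsto -e^{-1}c$, $c\mapsto -e^{-1}b$, $d\mapsto -e^{-1}a$, $e\mapsto e^{-1}$. For $i=1,2$ let $u_i$ be the $R_5$-subalgebra of $H_5$ generated by $s_i$. Set $\omega=s_2s_1^2s_2$. For $R_5$-submodules (or elements) $X_1,\dots,X_n$, $X_1\cdots X_n$ denotes the $R_5$-submodule spanned by products $x_1\cdots x_n$, $x_j\in X_j$; sums are sums of submodules. Define $U'=u_1u_2u_1+u_1\omega+u_1\omega^{-1}+u_1s_2^{-1}s_1^2s_2^{-1}u_1+u_1s_2s_1^{-2}s_2u_1+u_1s_2^2s_1^2s_2^2u_1+u_1s_2^{-2}s_1^{-2}s_2^{-2}u_1+u_1s_2s_1^{-2}s_2^2u_1+u_1s_2^{-1}s_1^2s_2^{-2}u_1+u_1s_2^{-1}s_1s_2^{-1}u_1+u_1s_2s_1^{-1}s_2u_1+u_1s_2^{-2}s_1^{-2}s_2^2u_1+u_1s_2^2s_1^2s_2^{-2}u_1+u_1s_2^2s_1^{-2}s_2^2u_1+u_1s_2^{-2}s_1^2s_2^{-2}u_1+u_1s_2^{-2}s_1s_2^{-1}u_1+u_1s_2^{-1}s_1s_2^{-2}u_1$;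 $U''=U'+u_1\omega^2+u_1\omega^{-2}+u_1s_2^{-2}s_1^2s_2^{-1}s_1s_2^{-1}u_1+u_1s_2^2s_1^{-2}s_2s_1^{-1}s_2u_1+u_1s_2s_1^{-2}s_2^2s_1^{-2}s_2^2u_1+u_1s_2^{-1}s_1^2s_2^{-2}s_1^2s_2^{-2}u_1$; $U'''=U''+u_1\omega^3+u_1\omega^{-3}$; $U''''=U'''+u_1\omega^4+u_1\omega^{-4}$; $U=U''''+u_1\omega^5+u_1\omega^{-5}$. *)

(* H_5 is presented as the Z-algebra (unital ring) generated by
   central commuting coefficient symbols a,b,c,d,e,e^{-1} and s1^{+-1}, s2^{+-1},
   subject to: e e^{-1} = 1, s_i s_i^{-1} = s_i^{-1} s_i = 1, braid relation,
   and the quintic relations.  This Z-algebra is exactly R_5 B_3 / (quintic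
   relations) = H_5.  Elements of H_5 are represented by terms modulo [heq];
   subsets of H_5 are predicates on terms (always saturated under [heq]). *)
From Stdlib Require Import List.
Import ListNotations.

Inductive term : Type :=
| tzero | tone
| tadd : term -> term -> term
| topp : term -> term
| tmul : term -> term -> term
| ta | tb | tc | td | te | tei
| ts1 | ts1i | ts2 | ts2i.

Fixpoint tpow (t : term) (n : nat) : term :=
  match n with O => tone | S n => tmul t (tpow t n) end.

Inductive coefgen : term -> Prop :=
| cg_a : coefgen ta | cg_b : coefgen tb | cg_c : coefgen tc
| cg_d : coefgen td | cg_e : coefgen te | cg_ei : coefgen tei.

Definition quintic_rhs (s : term) : term :=
  tadd (tmul ta (tpow s 4)) (tadd (tmul tb (tpow s 3)) (tadd (tmul tc (tpow s 2))
    (tadd (tmul td s) te))).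

Inductive heq : term -> term -> Prop :=
| heq_refl x : heq x x
| heq_sym x y : heq x y -> heq y x
| heq_trans x y z : heq x y -> heq y z -> heq x z
| heq_add x x' y y' : heq x x' -> heq y y' -> heq (tadd x y) (tadd x' y')
| heq_opp x x' : heq x x' -> heq (topp x) (topp x')
| heq_mul x x' y y' : heq x x' -> heq y y' -> heq (tmul x y) (tmul x' y')
| heq_addA x y z : heq (tadd x (tadd y z)) (tadd (tadd x y) z)
| heq_addC x y : heq (tadd x y) (tadd y x)
| heq_add0 x : heq (tadd tzero x) x
| heq_addN x : heq (tadd (topp x) x) tzero
| heq_mulA x y z : heq (tmul x (tmul y z)) (tmul (tmul x y) z)
| heq_mul1l x : heq (tmul tone x) x
| heq_mul1r x : heq (tmul x tone) x
| heq_mulDl x y z : heq (tmul (tadd x y) z) (tadd (tmul x z) (tmul y z))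
| heq_mulDr x y z : heq (tmul x (tadd y z)) (tadd (tmul x y) (tmul x z))
| heq_central x y : coefgen x -> heq (tmul x y) (tmul y x)
| heq_einv_r : heq (tmul te tei) tone
| heq_einv_l : heq (tmul tei te) tone
| heq_s1inv_r : heq (tmul ts1 ts1i) tone
| heq_s1inv_l : heq (tmul ts1i ts1) tone
| heq_s2inv_r : heq (tmul ts2 ts2i) tone
| heq_s2inv_l : heq (tmul ts2i ts2) tone
| heq_braid : heq (tmul ts1 (tmul ts2 ts1)) (tmul ts2 (tmul ts1 ts2))
| heq_quint1 : heq (tpow ts1 5) (quintic_rhs ts1)
| heq_quint2 : heq (tpow ts2 5) (quintic_rhs ts2).

Inductive scalar : term -> Prop :=
| sc_zero : scalar tzero
| sc_one : scalar tone
| sc_gen x : coefgen x -> scalar x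
| sc_add x y : scalar x -> scalar y -> scalar (tadd x y)
| sc_opp x : scalar x -> scalar (topp x)
| sc_mul x y : scalar x -> scalar y -> scalar (tmul x y).

Fixpoint Phi (t : term) : term :=
  match t with
  | tzero => tzero | tone => tone
  | tadd x y => tadd (Phi x) (Phi y)
  | topp x => topp (Phi x)
  | tmul x y => tmul (Phi x) (Phi y)
  | ta => topp (tmul tei td)
  | tb => topp (tmul tei tc)
  | tc => topp (tmul tei tb)
  | td => topp (tmul tei ta)
  | te => tei | tei => te
  | ts1 => ts1i | ts1i => ts1
  | ts2 => ts2i | ts2i => ts2
  end.

Inductive span (G : term -> Prop) : term -> Prop :=
| span_gen g : G g -> span G g
| span_zero : span G tzero
| span_add x y : span G x -> span G y -> span G (tadd x y)
| span_scal r x : scalar r -> span G x -> span G (tmul r x)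
| span_heq x y : heq x y -> span G x -> span G y.

Inductive subalg (g : term) : term -> Prop :=
| sa_scalar r : scalar r -> subalg g r
| sa_gen : subalg g g
| sa_add x y : subalg g x -> subalg g y -> subalg g (tadd x y)
| sa_mul x y : subalg g x -> subalg g y -> subalg g (tmul x y)
| sa_heq x y : heq x y -> subalg g x -> subalg g y.

Definition u1 : term -> Prop := subalg ts1.
Definition u2 : term -> Prop := subalg ts2.

Definition elt (w : term) : term -> Prop := fun t => t = w.

Fixpoint mulseq (xs : list term) : term :=
  match xs with
  | [] => tone
  | [x] => x
  | x :: xs' => tmul x (mulseq xs')
  end.

Definition prodN (Xs : list (term -> Prop)) : term -> Prop :=
  span (fun t => exists xs, Forall2 (fun (X : term -> Prop) x => X x) Xs xs
                            /\ t = mulseq xs).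

Definition sumN (Xs : list (term -> Prop)) : term -> Prop :=
  span (fun t => exists X, In X Xs /\ X t).

Definition w (xs : list term) : term := mulseq xs.

Definition omega : term := w [ts2; ts1; ts1; ts2].
Definition omega_inv : term := w [ts2i; ts1i; ts1i; ts2i].

Definition u1wu1 (xs : list term) := prodN [u1; elt (w xs); u1].

Definition s1_2 := [ts1; ts1].
Definition s1_m2 := [ts1i; ts1i].
Definition s2_2 := [ts2; ts2].
Definition s2_m2 := [ts2i; ts2i].

Definition U'_list : list (term -> Prop) :=
  [ prodN [u1; u2; u1];
    prodN [u1; elt omega];
    prodN [u1; elt omega_inv];
    u1wu1 ([ts2i] ++ s1_2 ++ [ts2i]);
    u1wu1 ([ts2] ++ s1_m2 ++ [ts2]);
    u1wu1 (s2_2 ++ s1_2 ++ s2_2);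
    u1wu1 (s2_m2 ++ s1_m2 ++ s2_m2);
    u1wu1 ([ts2] ++ s1_m2 ++ s2_2);
    u1wu1 ([ts2i] ++ s1_2 ++ s2_m2);
    u1wu1 [ts2i; ts1; ts2i];
    u1wu1 [ts2; ts1i; ts2];
    u1wu1 (s2_m2 ++ s1_m2 ++ s2_2);
    u1wu1 (s2_2 ++ s1_2 ++ s2_m2);
    u1wu1 (s2_2 ++ s1_m2 ++ s2_2);
    u1wu1 (s2_m2 ++ s1_2 ++ s2_m2);
    u1wu1 (s2_m2 ++ [ts1; ts2i]);
    u1wu1 ([ts2i; ts1] ++ s2_m2) ].

Definition U' : term -> Prop := sumN U'_list.

Definition U'' : term -> Prop :=
  sumN [ U';
         prodN [u1; elt (tpow omega 2)];
         prodN [u1; elt (tpow omega_inv 2)];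
         u1wu1 (s2_m2 ++ s1_2 ++ [ts2i; ts1; ts2i]);
         u1wu1 (s2_2 ++ s1_m2 ++ [ts2; ts1i; ts2]);
         u1wu1 ([ts2] ++ s1_m2 ++ s2_2 ++ s1_m2 ++ s2_2);
         u1wu1 ([ts2i] ++ s1_2 ++ s2_m2 ++ s1_2 ++ s2_m2) ].

Definition U''' : term -> Prop :=
  sumN [ U''; prodN [u1; elt (tpow omega 3)]; prodN [u1; elt (tpow omega_inv 3)] ].

Definition U'''' : term -> Prop :=
  sumN [ U'''; prodN [u1; elt (tpow omega 4)]; prodN [u1; elt (tpow omega_inv 4)] ].

Definition U : term -> Prop :=
  sumN [ U''''; prodN [u1; elt (tpow omega 5)]; prodN [u1; elt (tpow omega_inv 5)] ].

Definition Phi_stable (X : term -> Prop) : Prop := forall x, X x -> X (Phi x).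

From Stdlib Require Import List Setoid Morphisms Ring.
Import ListNotations.

(* Phi respects the defining relations of H_5: the braid relation goes to the braid relation
   between the inverses, and multiplying the quintic relation of s_i by e^{-1} s_i^{-5} gives
   a quintic relation for s_i^{-1} with the Phi-transformed coefficients.  The quintic also
   writes s_i^{-1} as a polynomial in s_i, so Phi preserves u1 and u2.  Hence Phi sends each
   generating submodule u1 x u1 (or u1 x, u1 u2 u1) of U', ..., U to u1 Phi(x) u1, which is
   again one of the listed submodules, with two exceptions coming from U':
   Phi(s2^-2 s1 s2^-1) = s2^2 s1^-1 s2 and its mirror image s2 s1^-1 s2^2.  For these,
   s2^2 s1^-1 s2 = s1 (s2 s1^3 s2^-2) s1^-1 by the braid relation; reducing s1^3 to a
   combination of s1^2, s1, 1, s1^-1, s1^-2 by the quintic and conjugating each term by s2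
   shows that u1 s2^2 s1^-1 s2 u1 is contained in U'. *)

Infix "**" := tmul (at level 41, right associativity).

#[global] Instance heq_Equivalence : Equivalence heq.
Proof. split; [exact heq_refl | exact heq_sym | exact heq_trans]. Qed.
#[global] Instance tadd_Proper : Proper (heq ==> heq ==> heq) tadd.
Proof. intros ? ? ? ? ? ?; apply heq_add; assumption. Qed.
#[global] Instance topp_Proper : Proper (heq ==> heq) topp.
Proof. intros ? ? ?; apply heq_opp; assumption. Qed.
#[global] Instance tmul_Proper : Proper (heq ==> heq ==> heq) tmul.
Proof. intros ? ? ? ? ? ?; apply heq_mul; assumption. Qed.

Lemma heq_add0r x : heq (tadd x tzero) x.
Proof. rewrite heq_addC; apply heq_add0. Qed.

Lemma heq_addNr x : heq (tadd x (topp x)) tzero.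
Proof. rewrite heq_addC; apply heq_addN. Qed.

Lemma heq_addI a x y : heq (tadd a x) (tadd a y) -> heq x y.
Proof.
  intro H. rewrite <- (heq_add0 x), <- (heq_add0 y), <- (heq_addN a), <- !heq_addA, H.
  reflexivity.
Qed.

Lemma heq_opp_unique x y : heq (tadd x y) tzero -> heq x (topp y).
Proof.
  intro H. rewrite <- (heq_add0r x), <- (heq_addNr y), heq_addA, H. apply heq_add0.
Qed.

Lemma heq_mul0l x : heq (tzero ** x) tzero.
Proof. apply (heq_addI (tzero ** x)). rewrite <- heq_mulDl, heq_add0, heq_add0r. reflexivity. Qed.

Lemma heq_mul0r x : heq (x ** tzero) tzero.
Proof. apply (heq_addI (x ** tzero)). rewrite <- heq_mulDr, heq_add0, heq_add0r. reflexivity. Qed.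

Lemma heq_mulNl x y : heq (topp x ** y) (topp (x ** y)).
Proof. apply heq_opp_unique. rewrite <- heq_mulDl, heq_addN. apply heq_mul0l. Qed.

Lemma heq_mulNr x y : heq (x ** topp y) (topp (x ** y)).
Proof. apply heq_opp_unique. rewrite <- heq_mulDr, heq_addN. apply heq_mul0r. Qed.

Lemma scalar_central r y : scalar r -> heq (r ** y) (y ** r).
Proof.
  intro Hr; revert y; induction Hr as [| | x Hx | x y _ IHx _ IHy | x _ IHx | x y _ IHx _ IHy];
    intro z.
  - rewrite heq_mul0l, heq_mul0r; reflexivity.
  - rewrite heq_mul1l, heq_mul1r; reflexivity.
  - apply heq_central; exact Hx.
  - rewrite heq_mulDl, heq_mulDr, IHx, IHy; reflexivity.
  - rewrite heq_mulNl, heq_mulNr, IHx; reflexivity.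
  - rewrite <- heq_mulA, IHy, heq_mulA, IHx, <- heq_mulA; reflexivity.
Qed.

Ltac scalar_auto :=
  repeat (apply sc_opp || apply sc_mul || apply sc_one || (apply sc_gen; constructor)).

Inductive laurent (s si : term) : term -> Prop :=
| laurent_scalar r : scalar r -> laurent s si r
| laurent_s : laurent s si s
| laurent_si : laurent s si si
| laurent_add x y : laurent s si x -> laurent s si y -> laurent s si (tadd x y)
| laurent_opp x : laurent s si x -> laurent s si (topp x)
| laurent_mul x y : laurent s si x -> laurent s si y -> laurent s si (x ** y).

Lemma laurent_centralized s si a :
  (forall r, scalar r -> heq (a ** r) (r ** a)) ->
  heq (a ** s) (s ** a) -> heq (a ** si) (si ** a) ->
  forall y, laurent s si y -> heq (a ** y) (y ** a).
Proof.
  intros Ha_r Ha_s Ha_si y Hy.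
  induction Hy as [r Hr| | | x y _ IHx _ IHy | x _ IHx | x y _ IHx _ IHy]; auto.
  - rewrite heq_mulDl, heq_mulDr, IHx, IHy; reflexivity.
  - rewrite heq_mulNl, heq_mulNr, IHx; reflexivity.
  - rewrite heq_mulA, IHx, <- heq_mulA, IHy, heq_mulA; reflexivity.
Qed.

Lemma laurent_mulC s si x y : heq (s ** si) (si ** s) ->
  laurent s si x -> laurent s si y -> heq (x ** y) (y ** x).
Proof.
  intros Hcomm Hx; revert y.
  assert (Hsc : forall a r, scalar r -> heq (a ** r) (r ** a))
    by (intros; symmetry; apply scalar_central; assumption).
  induction Hx as [r Hr| | | x x' _ IHx _ IHx' | x _ IHx | x x' _ IHx _ IHx']; intros z Hz.
  - apply scalar_central; exact Hr.
  - apply laurent_centralized with s si; auto; reflexivity.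
  - apply laurent_centralized with s si; auto; [symmetry; exact Hcomm | reflexivity].
  - rewrite heq_mulDl, heq_mulDr, IHx, IHx' by exact Hz; reflexivity.
  - rewrite heq_mulNl, heq_mulNr, IHx by exact Hz; reflexivity.
  - rewrite <- heq_mulA, IHx' by exact Hz.
    rewrite heq_mulA, IHx by exact Hz. rewrite <- heq_mulA; reflexivity.
Qed.

Definition inverse_poly (s : term) : term :=
  tadd (tei ** tpow s 4) (tadd (topp (tei ** ta) ** tpow s 3)
    (tadd (topp (tei ** tb) ** tpow s 2) (tadd (topp (tei ** tc) ** s) (topp (tei ** td))))).

(* [Phi (quintic_rhs s)] reduces to [quintic_inv_rhs (Phi s)]. *)
Definition quintic_inv_rhs (s : term) : term :=
  tadd (topp (tei ** td) ** tpow s 4) (tadd (topp (tei ** tc) ** tpow s 3)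
    (tadd (topp (tei ** tb) ** tpow s 2) (tadd (topp (tei ** ta) ** s) tei))).

(* [ring] needs a commutative ring: the subring generated by R_5, s and s^-1 is one. *)
Section LaurentRing.
Variables s si : term.
Hypothesis mul_s_si : heq (s ** si) tone.
Hypothesis mul_si_s : heq (si ** s) tone.
Hypothesis quintic_s : heq (tpow s 5) (quintic_rhs s).

Record lterm := LTerm { lval : term; lvalP : laurent s si lval }.
Definition leq (x y : lterm) : Prop := heq (lval x) (lval y).
Definition l0 : lterm := LTerm tzero (laurent_scalar _ _ _ sc_zero).
Definition l1 : lterm := LTerm tone (laurent_scalar _ _ _ sc_one).
Definition ladd (x y : lterm) : lterm :=
  LTerm (tadd (lval x) (lval y)) (laurent_add _ _ _ _ (lvalP x) (lvalP y)).
Definition lmul (x y : lterm) : lterm :=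
  LTerm (lval x ** lval y) (laurent_mul _ _ _ _ (lvalP x) (lvalP y)).
Definition lopp (x : lterm) : lterm := LTerm (topp (lval x)) (laurent_opp _ _ _ (lvalP x)).
Definition lsub (x y : lterm) : lterm := ladd x (lopp y).
Fixpoint lpow (x : lterm) (n : nat) : lterm :=
  match n with O => l1 | S n => lmul x (lpow x n) end.

Lemma lterm_setoid : Setoid_Theory lterm leq.
Proof. unfold leq; split; intro; intros; [reflexivity | symmetry | etransitivity]; eauto. Qed.

Lemma lterm_ext : ring_eq_ext ladd lmul lopp leq.
Proof.
  unfold leq; split; [intros ? ? H ? ? H' | intros ? ? H ? ? H' | intros ? ? H]; simpl;
    rewrite H; try rewrite H'; reflexivity.
Qed.

Lemma lterm_ring : ring_theory l0 l1 ladd lmul lsub lopp leq.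
Proof.
  unfold leq; split; intros; simpl.
  all: try solve [apply heq_add0 | apply heq_addC | apply heq_addA | apply heq_mul1l
                 | apply heq_mulA | apply heq_mulDl | apply heq_addNr | reflexivity].
  apply (laurent_mulC s si); try apply lvalP. rewrite mul_s_si, mul_si_s; reflexivity.
Qed.

#[local] Instance leq_Equivalence : Equivalence leq := lterm_setoid.

Add Ring lterm_ring : lterm_ring (setoid lterm_setoid lterm_ext).

Let ls : lterm := LTerm s (laurent_s s si).
Let lsi : lterm := LTerm si (laurent_si s si).
Let lcoef (x : term) (Hx : coefgen x) : lterm := LTerm x (laurent_scalar s si x (sc_gen x Hx)).
Local Notation a := (lcoef ta cg_a).
Local Notation b := (lcoef tb cg_b).
Local Notation c := (lcoef tc cg_c).
Local Notation d := (lcoef td cg_d).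
Local Notation e := (lcoef te cg_e).
Local Notation ei := (lcoef tei cg_ei).
Local Infix "==" := leq (at level 70).
Local Infix "+" := ladd.
Local Infix "*" := lmul.
Local Infix "-" := lsub.
Local Notation "- x" := (lopp x).
Local Infix "^" := lpow.

Let ls_lsi : ls * lsi == l1 := mul_s_si.
Let e_ei : e * ei == l1 := heq_einv_r.
Let quintic_ls : ls ^ 5 == a * ls ^ 4 + (b * ls ^ 3 + (c * ls ^ 2 + (d * ls + e))) := quintic_s.

Lemma inverse_as_poly : heq si (inverse_poly s).
Proof.
  change (lsi == ei * ls ^ 4 + ((- (ei * a)) * ls ^ 3 + ((- (ei * b)) * ls ^ 2
                  + ((- (ei * c)) * ls + - (ei * d))))).
  pose proof ls_lsi; pose proof e_ei; pose proof quintic_ls; cbn [lpow] in *.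
  transitivity (ei * lsi * (ls*ls*ls*ls*ls - a*ls*ls*ls*ls - b*ls*ls*ls - c*ls*ls - d*ls)).
  - ring [e_ei quintic_ls].
  - ring [ls_lsi].
Qed.

Lemma cube_reduction :
  heq (tpow s 3)
      (tadd (ta ** s ** s) (tadd (tb ** s) (tadd tc (tadd (td ** si) (te ** si ** si))))).
Proof.
  change (ls ^ 3 == a * (ls * ls) + (b * ls + (c + (d * lsi + e * (lsi * lsi))))).
  pose proof ls_lsi; pose proof quintic_ls; cbn [lpow] in *.
  transitivity (ls*ls*ls*ls*ls * lsi * lsi); [ring [ls_lsi] | ring [quintic_ls ls_lsi]].
Qed.

Lemma inverse_quintic : heq (tpow si 5) (quintic_inv_rhs si).
Proof.
  change (lsi ^ 5 == (- (ei * d)) * lsi ^ 4 + ((- (ei * c)) * lsi ^ 3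
                     + ((- (ei * b)) * lsi ^ 2 + ((- (ei * a)) * lsi + ei)))).
  pose proof ls_lsi; pose proof e_ei; pose proof quintic_ls; cbn [lpow] in *.
  transitivity (ei * (lsi*lsi*lsi*lsi*lsi)
                * (ls*ls*ls*ls*ls - a*ls*ls*ls*ls - b*ls*ls*ls - c*ls*ls - d*ls)).
  - ring [e_ei quintic_ls].
  - ring [ls_lsi].
Qed.

End LaurentRing.

(* Word identities carry a tail [t] so that they rewrite inside right-associated products. *)
Lemma heq_mulK x y : heq (x ** y) tone -> forall t, heq (x ** y ** t) t.
Proof. intros H t. rewrite heq_mulA, H. apply heq_mul1l. Qed.

Lemma s1_s1i t : heq (ts1 ** ts1i ** t) t.
Proof. exact (heq_mulK _ _ heq_s1inv_r t). Qed.

Lemma s1i_s1 t : heq (ts1i ** ts1 ** t) t.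
Proof. exact (heq_mulK _ _ heq_s1inv_l t). Qed.

Lemma s2_s2i t : heq (ts2 ** ts2i ** t) t.
Proof. exact (heq_mulK _ _ heq_s2inv_r t). Qed.

Lemma s2i_s2 t : heq (ts2i ** ts2 ** t) t.
Proof. exact (heq_mulK _ _ heq_s2inv_l t). Qed.

Lemma braid t : heq (ts1 ** ts2 ** ts1 ** t) (ts2 ** ts1 ** ts2 ** t).
Proof.
  rewrite (heq_mulA ts2 ts1 t), (heq_mulA ts1 (ts2 ** ts1) t), heq_braid.
  rewrite <- heq_mulA, <- (heq_mulA ts1 ts2 t). reflexivity.
Qed.

Lemma conj_iter g gi k ki h h' :
  (forall t, heq (gi ** g ** t) t) -> (forall t, heq (k ** ki ** t) t) ->
  (forall t, heq (g ** h ** gi ** t) (ki ** h' ** k ** t)) ->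
  forall n t, heq (g ** Nat.iter (S n) (tmul h) (gi ** t))
                  (ki ** Nat.iter (S n) (tmul h') (k ** t)).
Proof.
  intros Hg Hk Hconj n; induction n as [|n IHn]; intro t; [apply Hconj|].
  change (heq (g ** h ** Nat.iter (S n) (tmul h) (gi ** t))
              (ki ** h' ** Nat.iter (S n) (tmul h') (k ** t))).
  rewrite <- (Hg (Nat.iter (S n) (tmul h) (gi ** t))), Hconj, IHn, Hk.
  reflexivity.
Qed.

Lemma conj_s2_s1 t : heq (ts2 ** ts1 ** ts2i ** t) (ts1i ** ts2 ** ts1 ** t).
Proof. rewrite <- (s1i_s1 (ts2 ** ts1 ** ts2i ** t)), braid, s2_s2i. reflexivity. Qed.

Lemma conj_s2i_s1 t : heq (ts2i ** ts1 ** ts2 ** t) (ts1 ** ts2 ** ts1i ** t).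
Proof. rewrite <- (s1_s1i t) at 1. rewrite braid, s2i_s2. reflexivity. Qed.

Lemma conj_s2_s1i t : heq (ts2 ** ts1i ** ts2i ** t) (ts1i ** ts2i ** ts1 ** t).
Proof. rewrite <- (s1i_s1 (ts2 ** ts1i ** ts2i ** t)), <- conj_s2i_s1, s2_s2i. reflexivity. Qed.

Lemma conj_s2i_s1i t : heq (ts2i ** ts1i ** ts2 ** t) (ts1 ** ts2i ** ts1i ** t).
Proof. rewrite <- (s1_s1i t) at 1. rewrite <- conj_s2_s1, s2i_s2. reflexivity. Qed.

Lemma braid_inv t : heq (ts1i ** ts2i ** ts1i ** t) (ts2i ** ts1i ** ts2i ** t).
Proof. rewrite <- (s1i_s1 (ts2i ** ts1i ** ts2i ** t)), <- conj_s2i_s1i, s2_s2i. reflexivity. Qed.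

Lemma conj_s2_s1_2 t :
  heq (ts2 ** ts1 ** ts1 ** ts2i ** t) (ts1i ** ts2 ** ts2 ** ts1 ** t).
Proof. exact (conj_iter _ _ _ _ _ _ s2i_s2 s1_s1i conj_s2_s1 1 t). Qed.

Lemma conj_s2_s1_3 t :
  heq (ts2 ** ts1 ** ts1 ** ts1 ** ts2i ** t) (ts1i ** ts2 ** ts2 ** ts2 ** ts1 ** t).
Proof. exact (conj_iter _ _ _ _ _ _ s2i_s2 s1_s1i conj_s2_s1 2 t). Qed.

Lemma conj_s2i_s1_2 t :
  heq (ts2i ** ts1 ** ts1 ** ts2 ** t) (ts1 ** ts2 ** ts2 ** ts1i ** t).
Proof. exact (conj_iter _ _ _ _ _ _ s2_s2i s1i_s1 conj_s2i_s1 1 t). Qed.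

Lemma conj_s2i_s1_3 t :
  heq (ts2i ** ts1 ** ts1 ** ts1 ** ts2 ** t) (ts1 ** ts2 ** ts2 ** ts2 ** ts1i ** t).
Proof. exact (conj_iter _ _ _ _ _ _ s2_s2i s1i_s1 conj_s2i_s1 2 t). Qed.

Lemma conj_s2_s1i_2 t :
  heq (ts2 ** ts1i ** ts1i ** ts2i ** t) (ts1i ** ts2i ** ts2i ** ts1 ** t).
Proof. exact (conj_iter _ _ _ _ _ _ s2i_s2 s1_s1i conj_s2_s1i 1 t). Qed.

Lemma conj_s2i_s1i_2 t :
  heq (ts2i ** ts1i ** ts1i ** ts2 ** t) (ts1 ** ts2i ** ts2i ** ts1i ** t).
Proof. exact (conj_iter _ _ _ _ _ _ s2_s2i s1i_s1 conj_s2i_s1i 1 t). Qed.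

Lemma heq_mul1r_inj x y : heq (x ** tone) (y ** tone) -> heq x y.
Proof. rewrite !heq_mul1r; trivial. Qed.

Ltac assoc_right :=
  cbn [w mulseq tpow]; apply heq_mul1r_inj;
  repeat rewrite <- heq_mulA; repeat rewrite heq_mul1l.

Lemma Phi_scalar r : scalar r -> scalar (Phi r).
Proof.
  induction 1 as [| | x Hx | | |]; simpl; try (constructor; assumption).
  destruct Hx; simpl; scalar_auto.
Qed.

Lemma Phi_heq x y : heq x y -> heq (Phi x) (Phi y).
Proof.
  induction 1; simpl; try (econstructor; eassumption).
  all: first
    [ apply scalar_central, Phi_scalar, sc_gen; assumption
    | apply heq_einv_l | apply heq_einv_r | apply heq_s1inv_l | apply heq_s1inv_r
    | apply heq_s2inv_l | apply heq_s2inv_r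
    | assoc_right; apply braid_inv
    | exact (inverse_quintic _ _ heq_s1inv_r heq_s1inv_l heq_quint1)
    | exact (inverse_quintic _ _ heq_s2inv_r heq_s2inv_l heq_quint2) ].
Qed.

Lemma subalg_tpow g n : subalg g (tpow g n).
Proof.
  induction n; simpl; [apply sa_scalar, sc_one | apply sa_mul; [apply sa_gen | assumption]].
Qed.

Lemma subalg_inverse_poly g : subalg g (inverse_poly g).
Proof.
  unfold inverse_poly.
  repeat first [ apply subalg_tpow | apply sa_gen | apply sa_add | apply sa_mul
               | apply sa_scalar; scalar_auto ].
Qed.

Lemma u1_s1i : u1 ts1i.
Proof.
  eapply sa_heq; [symmetry; exact (inverse_as_poly _ _ heq_s1inv_r heq_s1inv_l heq_quint1)|].
  apply subalg_inverse_poly.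
Qed.

Lemma u2_s2i : u2 ts2i.
Proof.
  eapply sa_heq; [symmetry; exact (inverse_as_poly _ _ heq_s2inv_r heq_s2inv_l heq_quint2)|].
  apply subalg_inverse_poly.
Qed.

Definition Phi_maps (X Y : term -> Prop) : Prop := forall x, X x -> Y (Phi x).

Lemma Phi_maps_subalg g : subalg g (Phi g) -> Phi_maps (subalg g) (subalg g).
Proof.
  intros Hg x Hx; induction Hx; simpl.
  - apply sa_scalar, Phi_scalar; assumption.
  - exact Hg.
  - apply sa_add; assumption.
  - apply sa_mul; assumption.
  - eapply sa_heq; [apply Phi_heq|]; eassumption.
Qed.

Lemma Phi_maps_u1 : Phi_maps u1 u1.
Proof. exact (Phi_maps_subalg ts1 u1_s1i). Qed.

Lemma Phi_maps_u2 : Phi_maps u2 u2.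
Proof. exact (Phi_maps_subalg ts2 u2_s2i). Qed.

Lemma Phi_maps_elt x : Phi_maps (elt x) (elt (Phi x)).
Proof. intros y ->; reflexivity. Qed.

Lemma Phi_maps_span G G' : (forall g, G g -> span G' (Phi g)) -> Phi_maps (span G) (span G').
Proof.
  intros HG x Hx; induction Hx; simpl.
  - auto.
  - apply span_zero.
  - apply span_add; assumption.
  - apply span_scal; [apply Phi_scalar|]; assumption.
  - eapply span_heq; [apply Phi_heq|]; eassumption.
Qed.

Lemma span_sub G G' : (forall g, G g -> span G' g) -> forall x, span G x -> span G' x.
Proof.
  intros HG x Hx; induction Hx.
  - auto.
  - apply span_zero.
  - apply span_add; assumption.
  - apply span_scal; assumption.
  - eapply span_heq; eassumption.
Qed.

Lemma Phi_mulseq xs : Phi (mulseq xs) = mulseq (map Phi xs).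
Proof. induction xs as [|x [|y xs] IH]; [reflexivity.. | simpl in *; rewrite IH; reflexivity]. Qed.

Lemma Phi_maps_prodN Xs Ys : Forall2 Phi_maps Xs Ys -> Phi_maps (prodN Xs) (prodN Ys).
Proof.
  intros HXY. apply Phi_maps_span. intros g [xs [Hxs ->]].
  apply span_gen. exists (map Phi xs). split; [|apply Phi_mulseq].
  revert xs Hxs. induction HXY as [|X Y Xs Ys HXY _ IH]; intros xs Hxs;
    inversion Hxs; subst; constructor; auto.
Qed.

Lemma sumN_In X L t : In X L -> X t -> sumN L t.
Proof. intros HX Ht. apply span_gen. exists X; auto. Qed.

Lemma Phi_maps_sumN L L' :
  (forall X, In X L -> Phi_maps X (sumN L')) -> Phi_maps (sumN L) (sumN L').
Proof. intros HL. apply Phi_maps_span. intros g [X [HX Hg]]. exact (HL X HX g Hg). Qed.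

Lemma Phi_maps_prodN_In Xs Ys L :
  Forall2 Phi_maps Xs Ys -> In (prodN Ys) L -> Phi_maps (prodN Xs) (sumN L).
Proof. intros HXY HY x Hx. apply (sumN_In _ _ _ HY), (Phi_maps_prodN _ _ HXY), Hx. Qed.

Lemma heq_scalar_mid r x y : scalar r -> heq (x ** r ** y) (r ** x ** y).
Proof.
  intro Hr. rewrite (heq_mulA x r), <- (scalar_central r x), <- heq_mulA by exact Hr.
  reflexivity.
Qed.

Definition sandwich (t : term) : Prop := forall x1 x2, u1 x1 -> u1 x2 -> U' (x1 ** t ** x2).

Lemma sandwich_heq t t' : heq t t' -> sandwich t -> sandwich t'.
Proof.
  intros E H x1 x2 H1 H2. eapply span_heq; [| exact (H x1 x2 H1 H2)]. rewrite E; reflexivity.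
Qed.

Lemma sandwich_add t t' : sandwich t -> sandwich t' -> sandwich (tadd t t').
Proof.
  intros H H' x1 x2 H1 H2.
  eapply span_heq; [| exact (span_add _ _ _ (H x1 x2 H1 H2) (H' x1 x2 H1 H2))].
  rewrite heq_mulDl, heq_mulDr; reflexivity.
Qed.

Lemma sandwich_scal r t : scalar r -> sandwich t -> sandwich (r ** t).
Proof.
  intros Hr H x1 x2 H1 H2. eapply span_heq; [| exact (span_scal _ _ _ Hr (H x1 x2 H1 H2))].
  rewrite <- (heq_mulA r t x2), (heq_scalar_mid r x1) by exact Hr. reflexivity.
Qed.

Lemma sandwich_mull x t : u1 x -> sandwich t -> sandwich (x ** t).
Proof.
  intros Hx H x1 x2 H1 H2. eapply span_heq; [| exact (H (x1 ** x) x2 (sa_mul _ _ _ H1 Hx) H2)].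
  rewrite <- !heq_mulA; reflexivity.
Qed.

Lemma sandwich_mulr x t : u1 x -> sandwich t -> sandwich (t ** x).
Proof.
  intros Hx H x1 x2 H1 H2. eapply span_heq; [| exact (H x1 (x ** x2) H1 (sa_mul _ _ _ Hx H2))].
  rewrite <- !heq_mulA; reflexivity.
Qed.

Ltac Forall2_auto :=
  repeat (apply Forall2_cons; [first [assumption | reflexivity] |]); apply Forall2_nil.

Ltac Forall2_Phi_maps :=
  repeat (apply Forall2_cons;
          [first [apply Phi_maps_u1 | apply Phi_maps_u2 | apply Phi_maps_elt] |]);
  apply Forall2_nil.

Ltac In_auto := cbn; repeat first [left; reflexivity | right].

Lemma sandwich_u2 y : u2 y -> sandwich y.
Proof.
  intros Hy x1 x2 H1 H2. apply (sumN_In (prodN [u1; u2; u1]) U'_list); [In_auto|].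
  apply span_gen. exists [x1; y; x2]. split; [Forall2_auto | reflexivity].
Qed.

Lemma sandwich_word v : In (u1wu1 v) U'_list -> sandwich (w v).
Proof.
  intros Hv x1 x2 H1 H2. apply (sumN_In _ U'_list _ Hv).
  apply span_gen. exists [x1; w v; x2]. split; [Forall2_auto | reflexivity].
Qed.

Lemma sandwich_cube l r :
  sandwich (l ** (ts1 ** ts1) ** r) -> sandwich (l ** ts1 ** r) -> sandwich (l ** r) ->
  sandwich (l ** ts1i ** r) -> sandwich (l ** (ts1i ** ts1i) ** r) ->
  sandwich (l ** tpow ts1 3 ** r).
Proof.
  intros H2 H1 H0 Hm1 Hm2.
  apply sandwich_heq with (tadd (ta ** l ** (ts1 ** ts1) ** r) (tadd (tb ** l ** ts1 ** r)
    (tadd (tc ** l ** r) (tadd (td ** l ** ts1i ** r) (te ** l ** (ts1i ** ts1i) ** r))))).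
  { rewrite (cube_reduction _ _ heq_s1inv_r heq_s1inv_l heq_quint1), !heq_mulDl, !heq_mulDr.
    rewrite <- !heq_mulA, (heq_scalar_mid ta), (heq_scalar_mid tb), (heq_scalar_mid tc),
      (heq_scalar_mid td), (heq_scalar_mid te) by (apply sc_gen; constructor).
    reflexivity. }
  repeat apply sandwich_add; apply sandwich_scal; auto; apply sc_gen; constructor.
Qed.

Lemma sandwich_s2_s2_s1i_s2 : sandwich (w [ts2; ts2; ts1i; ts2]).
Proof.
  apply sandwich_heq with (ts1 ** (ts2 ** tpow ts1 3 ** ts2i ** ts2i) ** ts1i).
  { assoc_right. rewrite conj_s2_s1_3, s1_s1i, <- conj_s2i_s1i, s2_s2i. reflexivity. }
  apply sandwich_mull; [apply sa_gen|]. apply sandwich_mulr; [apply u1_s1i|].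
  apply sandwich_cube.
  - apply sandwich_heq with (ts1i ** w [ts2; ts1i; ts2] ** ts1).
    { assoc_right. rewrite conj_s2_s1_2, <- conj_s2_s1. reflexivity. }
    apply sandwich_mull; [apply u1_s1i|]. apply sandwich_mulr; [apply sa_gen|].
    apply sandwich_word; In_auto.
  - apply sandwich_heq with (ts1i ** ts1i ** ts2 ** ts1).
    { assoc_right. rewrite !conj_s2_s1. reflexivity. }
    apply sandwich_mull; [apply u1_s1i|]. apply sandwich_mull; [apply u1_s1i|].
    apply sandwich_mulr; [apply sa_gen|]. apply sandwich_u2, sa_gen.
  - apply sandwich_heq with ts2i.
    { assoc_right. rewrite s2_s2i. reflexivity. }
    apply sandwich_u2, u2_s2i.
  - apply sandwich_heq with (ts1i ** w [ts2i; ts1; ts2i]).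
    { assoc_right. rewrite conj_s2_s1i. reflexivity. }
    apply sandwich_mull; [apply u1_s1i|]. apply sandwich_word; In_auto.
  - apply sandwich_heq with (ts1i ** w [ts2i; ts2i; ts1; ts2i]).
    { assoc_right. rewrite conj_s2_s1i_2. reflexivity. }
    apply sandwich_mull; [apply u1_s1i|]. apply sandwich_word; In_auto.
Qed.

Lemma sandwich_s2_s1i_s2_s2 : sandwich (w [ts2; ts1i; ts2; ts2]).
Proof.
  apply sandwich_heq with (ts1i ** ((ts2i ** ts2i) ** tpow ts1 3 ** ts2) ** ts1).
  { assoc_right. rewrite conj_s2i_s1_3, s1i_s1, <- conj_s2_s1i, s2i_s2. reflexivity. }
  apply sandwich_mull; [apply u1_s1i|]. apply sandwich_mulr; [apply sa_gen|].
  apply sandwich_cube.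
  - apply sandwich_heq with (ts1 ** w [ts2; ts1i; ts2] ** ts1i).
    { assoc_right. rewrite conj_s2i_s1_2, conj_s2i_s1. reflexivity. }
    apply sandwich_mull; [apply sa_gen|]. apply sandwich_mulr; [apply u1_s1i|].
    apply sandwich_word; In_auto.
  - apply sandwich_heq with (ts1 ** (ts2 ** ts1i) ** ts1i).
    { assoc_right. rewrite !conj_s2i_s1. reflexivity. }
    apply sandwich_mull; [apply sa_gen|]. apply sandwich_mulr; [apply u1_s1i|].
    apply sandwich_mulr; [apply u1_s1i|]. apply sandwich_u2, sa_gen.
  - apply sandwich_heq with ts2i.
    { assoc_right. rewrite s2i_s2. reflexivity. }
    apply sandwich_u2, u2_s2i.
  - apply sandwich_heq with (w [ts2i; ts1; ts2i] ** ts1i).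
    { assoc_right. rewrite conj_s2i_s1i. reflexivity. }
    apply sandwich_mulr; [apply u1_s1i|]. apply sandwich_word; In_auto.
  - apply sandwich_heq with (w [ts2i; ts1; ts2i; ts2i] ** ts1i).
    { assoc_right. rewrite conj_s2i_s1i_2. reflexivity. }
    apply sandwich_mulr; [apply u1_s1i|]. apply sandwich_word; In_auto.
Qed.

Lemma Phi_maps_In_stable X L : In X L -> Phi_stable X -> Phi_maps X (sumN L).
Proof. intros HX Hstab x Hx. exact (sumN_In _ _ _ HX (Hstab x Hx)). Qed.

Lemma Phi_maps_u1wu1_sandwich v : sandwich (Phi (w v)) -> Phi_maps (u1wu1 v) U'.
Proof.
  intros Hw t Ht. apply (Phi_maps_prodN [u1; elt (w v); u1] [u1; elt (Phi (w v)); u1]) in Ht;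
    [| Forall2_Phi_maps].
  revert Ht. apply span_sub. intros g [xs [Hxs ->]].
  inversion Hxs as [|? x1 ? ? H1 Hxs1]; subst; inversion Hxs1 as [|? y ? ? Hy Hxs2]; subst;
    inversion Hxs2 as [|? x2 ? ? H2 Hxs3]; subst; inversion Hxs3; subst.
  unfold elt in Hy; subst. exact (Hw x1 x2 H1 H2).
Qed.

Ltac In_cases H :=
  simpl in H; repeat destruct H as [<- | H]; [.. | contradiction].

Ltac Phi_maps_generator :=
  eapply Phi_maps_prodN_In; [Forall2_Phi_maps | In_auto].

Lemma Phi_stable_U' : Phi_stable U'.
Proof.
  apply Phi_maps_sumN. intros X HX. In_cases HX; try solve [Phi_maps_generator].
  - apply Phi_maps_u1wu1_sandwich, sandwich_s2_s2_s1i_s2.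
  - apply Phi_maps_u1wu1_sandwich, sandwich_s2_s1i_s2_s2.
Qed.

Lemma Phi_stable_U'' : Phi_stable U''.
Proof.
  apply Phi_maps_sumN. intros X HX. In_cases HX; try solve [Phi_maps_generator].
  apply Phi_maps_In_stable; [In_auto | exact Phi_stable_U'].
Qed.

Lemma Phi_stable_U''' : Phi_stable U'''.
Proof.
  apply Phi_maps_sumN. intros X HX. In_cases HX; try solve [Phi_maps_generator].
  apply Phi_maps_In_stable; [In_auto | exact Phi_stable_U''].
Qed.

Lemma Phi_stable_U'''' : Phi_stable U''''.
Proof.
  apply Phi_maps_sumN. intros X HX. In_cases HX; try solve [Phi_maps_generator].
  apply Phi_maps_In_stable; [In_auto | exact Phi_stable_U'''].
Qed.

Lemma Phi_stable_U : Phi_stable U.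
Proof.
  apply Phi_maps_sumN. intros X HX. In_cases HX; try solve [Phi_maps_generator].
  apply Phi_maps_In_stable; [In_auto | exact Phi_stable_U''''].
Qed.

Theorem lemma4p1 :
  Phi_stable U' /\ Phi_stable U'' /\ Phi_stable U''' /\ Phi_stable U'''' /\ Phi_stable U.
Proof.
  exact (conj Phi_stable_U' (conj Phi_stable_U'' (conj Phi_stable_U'''
           (conj Phi_stable_U'''' Phi_stable_U)))).
Qed.
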